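(* The logic $\mathsf{CS4}$ has the finite model property: for every formula $\varphi$, if $\mathsf{CS4}\nvdash\varphi$, then there is a $\mathsf{CS4}$-model $\mathcal M=(W,W_\bot,\preccurlyeq,\sqsubseteq,V)$ with $W$ finite such that $\mathcal M\not\models\varphi$. (Conversely, every theorem of $\mathsf{CS4}$ is valid on all $\mathsf{CS4}$-models.)
   Context: Fix a countably infinite set $\mathbb P$ of propositional variables. Formulas: $\varphi,\psi ::= p\mid\bot\mid(\varphi\wedge\psi)\mid(\varphi\vee\psi)\mid(\varphi\to\psi)\mid\Diamond\varphi\mid\Box\varphi$ with $p\in\mathbb P$; $\neg\varphi:=\varphi\to\bot$. A bi-intuitionistic frame is $\mathcal F=(W,W_\bot,\preccurlyeq,\sqsubseteq)$ where $\preccurlyeq$ and $\sqsubseteq$ are preorders on a set $W$ and $W_\bot\subseteq W$ (the fallible worlds) is upward closed under both $\preccurlyeq$ and $\sqsubseteq$; it is infallible if $W_\bot=\varnothing$. A valuation is a map $V:\mathbb P\to 2^W$ such that each $V(p)$ is upward closed under $\preccurlyeq$ and $W_\bot\subseteq V(p)$; a model is $\mathcal M=(W,W_\bot,\preccurlyeq,\sqsubseteq,V)$. Satisfaction: $(\mathcal M,w)\models p$ iff $w\in V(p)$; $(\mathcal M,w)\models\bot$ iff $w\in W_\bot$; $\wedge,\vee$ pointwise; $(\mathcal M,w)\models\varphi\to\psi$ iff for all $v\succcurlyeq w$, $(\mathcal M,v)\models\varphi$ implies $(\mathcal M,v)\models\psi$; $(\mathcal M,w)\models\Diamond\varphi$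 iff for all $u\succcurlyeq w$ there is $v\sqsupseteq u$ with $(\mathcal M,v)\models\varphi$; $(\mathcal M,w)\models\Box\varphi$ iff for all $u,v$ with $w\preccurlyeq u\sqsubseteq v$, $(\mathcal M,v)\models\varphi$. $\mathcal M\models\varphi$ means $(\mathcal M,w)\models\varphi$ for all $w\in W\setminus W_\bot$. For $R\subseteq W\times W$ (relative to $\preccurlyeq$): $R$ is backward confluent if $wRv\preccurlyeq v'$ implies there is $w'$ with $w\preccurlyeq w'Rv'$. A $\mathsf{CS4}$-frame is a bi-intuitionistic frame in which $\sqsubseteq$ is backward confluent; a $\mathsf{CS4}$-model is a model on such a frame. $\mathsf{CS4}$ is the least set of formulas containing all intuitionistic propositional tautologies (in this language) and all instances of $\Box(\varphi\to\psi)\to(\Box\varphi\to\Box\psi)$, $\Box(\varphi\to\psi)\to(\Diamond\varphi\to\Diamond\psi)$, $\Box\varphi\to\varphi$, $\varphi\to\Diamond\varphi$, $\Box\varphi\to\Box\Box\varphi$, $\Diamond\Diamond\varphi\to\Diamond\varphi$, closed under modus ponens and necessitation (from $\varphi$ infer $\Box\varphi$). *)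

From Stdlib Require Import List.

Inductive form : Type :=
| Var : nat -> form
| Bot : form
| And : form -> form -> form
| Or  : form -> form -> form
| Imp : form -> form -> form
| Dia : form -> form
| Box : form -> form.

Definition Neg (phi : form) : form := Imp phi Bot.

(* Hilbert-style axiomatization of intuitionistic propositional logic in the
   full modal language: its theorems (closed under MP) are exactly the
   substitution instances of intuitionistic propositional tautologies. *)
Inductive IPC_axiom : form -> Prop :=
| ax_K  : forall a b, IPC_axiom (Imp a (Imp b a))
| ax_S  : forall a b c,
    IPC_axiom (Imp (Imp a (Imp b c)) (Imp (Imp a b) (Imp a c)))
| ax_andE1 : forall a b, IPC_axiom (Imp (And a b) a)
| ax_andE2 : forall a b, IPC_axiom (Imp (And a b) b)
| ax_andI  : forall a b, IPC_axiom (Imp a (Imp b (And a b)))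
| ax_orI1  : forall a b, IPC_axiom (Imp a (Or a b))
| ax_orI2  : forall a b, IPC_axiom (Imp b (Or a b))
| ax_orE   : forall a b c,
    IPC_axiom (Imp (Imp a c) (Imp (Imp b c) (Imp (Or a b) c)))
| ax_efq   : forall a, IPC_axiom (Imp Bot a).

Inductive CS4 : form -> Prop :=
| cs4_ipc : forall a, IPC_axiom a -> CS4 a
| cs4_K   : forall a b, CS4 (Imp (Box (Imp a b)) (Imp (Box a) (Box b)))
| cs4_Kd  : forall a b, CS4 (Imp (Box (Imp a b)) (Imp (Dia a) (Dia b)))
| cs4_T   : forall a, CS4 (Imp (Box a) a)
| cs4_Td  : forall a, CS4 (Imp a (Dia a))
| cs4_4   : forall a, CS4 (Imp (Box a) (Box (Box a)))
| cs4_4d  : forall a, CS4 (Imp (Dia (Dia a)) (Dia a))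
| cs4_MP  : forall a b, CS4 (Imp a b) -> CS4 a -> CS4 b
| cs4_Nec : forall a, CS4 a -> CS4 (Box a).

Definition preorder {W : Type} (R : W -> W -> Prop) : Prop :=
  (forall w, R w w) /\ (forall u v w, R u v -> R v w -> R u w).

Definition up_closed {W : Type} (R : W -> W -> Prop) (A : W -> Prop) : Prop :=
  forall w v, A w -> R w v -> A v.

Record frame := {
  world : Type;
  fallible : world -> Prop;
  le : world -> world -> Prop;
  sq : world -> world -> Prop;
  le_pre : preorder le;
  sq_pre : preorder sq;
  fallible_up_le : up_closed le fallible;
  fallible_up_sq : up_closed sq fallible
}.

Definition backward_confluent {W : Type} (le R : W -> W -> Prop) : Prop :=
  forall w v v', R w v -> le v v' -> exists w', le w w' /\ R w' v'.

Definition CS4_frame (F : frame) : Prop := backward_confluent (le F) (sq F).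

Record model := {
  mframe : frame;
  val : nat -> world mframe -> Prop;
  val_up : forall p, up_closed (le mframe) (val p);
  val_fallible : forall p w, fallible mframe w -> val p w
}.

Definition CS4_model (M : model) : Prop := CS4_frame (mframe M).

Fixpoint sat (M : model) (w : world (mframe M)) (phi : form) : Prop :=
  match phi with
  | Var p => val M p w
  | Bot => fallible (mframe M) w
  | And a b => sat M w a /\ sat M w b
  | Or a b => sat M w a \/ sat M w b
  | Imp a b => forall v, le (mframe M) w v -> sat M v a -> sat M v b
  | Dia a => forall u, le (mframe M) w u ->
               exists v, sq (mframe M) u v /\ sat M v a
  | Box a => forall u v, le (mframe M) w u -> sq (mframe M) u v -> sat M v a
  end.

Definition valid_in (M : model) (phi : form) : Prop :=
  forall w, ~ fallible (mframe M) w -> sat M w phi.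

Definition finite_type (T : Type) : Prop := exists l : list T, forall x, In x l.

(* Soundness is an induction on derivations, using that forcing persists
   along ≼ and that fallible worlds force everything; backward confluence of
   ⊑ is what validates □a → □□a.

   Completeness is proved with a finite canonical model over a list S of
   formulas that contains ⊥ and is closed under subformulas.  A world is a
   prime theory Γ ⊆ S closed under derivability within S, together with an
   optional target c such that ◇c ∈ S is refuted by Γ.  The order ≼ is
   inclusion of theories; ⊑ preserves □-formulas, ⊥ and the target.  Targets
   make the ◇-clause work: a world refuting ◇a is retagged with target a, and
   none of its ⊑-successors can contain a.  Lindenbaum's lemma relative to S
   produces worlds, the truth lemma identifies forcing with membership on S,
   and a world is determined by a subset of S and a target, so the model is
   finite.  With S = ⊥ :: sub φ, a non-theorem φ is refuted at the world
   obtained from Lindenbaum's lemma applied to the empty set. *)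
From Stdlib Require Import List Classical ClassicalEpsilon FunctionalExtensionality PropExtensionality.
Import ListNotations.

Lemma frame_le_refl {F : frame} (w : world F) : le F w w.
Proof. apply (le_pre F). Qed.

Lemma frame_le_trans {F : frame} (u v w : world F) : le F u v -> le F v w -> le F u w.
Proof. apply (le_pre F). Qed.

Lemma frame_sq_refl {F : frame} (w : world F) : sq F w w.
Proof. apply (sq_pre F). Qed.

Lemma frame_sq_trans {F : frame} (u v w : world F) : sq F u v -> sq F v w -> sq F u w.
Proof. apply (sq_pre F). Qed.

Section Soundness.
Variable M : model.

Lemma sat_persistent a : forall w v, le (mframe M) w v -> sat M w a -> sat M v a.
Proof.
  induction a; simpl; intros w v Hwv H.
  - eapply val_up; eauto.
  - eapply fallible_up_le; eauto.
  - destruct H; split; eauto.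
  - destruct H; [left | right]; eauto.
  - intros u Hvu Hu. apply (H u); [eapply frame_le_trans; eauto | exact Hu].
  - intros u Hvu. apply H. eapply frame_le_trans; eauto.
  - intros u x Hvu Hux. apply (H u x); [eapply frame_le_trans; eauto | exact Hux].
Qed.

Lemma sat_fallible a : forall w, fallible (mframe M) w -> sat M w a.
Proof.
  induction a; simpl; intros w Hf.
  - apply val_fallible; exact Hf.
  - exact Hf.
  - split; auto.
  - left; auto.
  - intros v Hwv _. apply IHa2. eapply fallible_up_le; eauto.
  - intros u Hwu. exists u. split; [apply frame_sq_refl |].
    apply IHa. eapply fallible_up_le; eauto.
  - intros u v Hwu Huv. apply IHa.
    eapply fallible_up_sq; [eapply fallible_up_le |]; eauto.
Qed.

Lemma IPC_axiom_sound a : IPC_axiom a -> forall w, sat M w a.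
Proof.
  destruct 1; simpl.
  - intros w v1 _ Ha v2 H12 _. eapply sat_persistent; eauto.
  - intros w v1 _ H1 v2 H12 H2 v3 H23 Hx.
    apply (H1 v3 (frame_le_trans _ _ _ H12 H23) Hx v3 (frame_le_refl _)).
    apply (H2 v3 H23 Hx).
  - intros w v _ [Hx _]; exact Hx.
  - intros w v _ [_ Hy]; exact Hy.
  - intros w v1 _ Hx v2 H12 Hy. split; [eapply sat_persistent; eauto | exact Hy].
  - intros w v _ Hx; left; exact Hx.
  - intros w v _ Hx; right; exact Hx.
  - intros w v1 _ H1 v2 H12 H2 v3 H23 [Hx | Hx].
    + apply (H1 v3 (frame_le_trans _ _ _ H12 H23) Hx).
    + apply (H2 v3 H23 Hx).
  - intros w v _ Hb. apply sat_fallible; exact Hb.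
Qed.

(* Soundness: in a CS4-model every theorem of CS4 is forced at every world.
   Backward confluence is exactly what validates the axiom □a → □□a. *)
Lemma CS4_sound : CS4_model M -> forall a, CS4 a -> forall w, sat M w a.
Proof.
  intros Hconf a Ha. induction Ha; simpl.
  - apply IPC_axiom_sound; assumption.
  - intros w v1 _ H1 v2 H12 H2 u x Hu Hux.
    apply (H1 u x (frame_le_trans _ _ _ H12 Hu) Hux x (frame_le_refl _)).
    apply (H2 u x Hu Hux).
  - intros w v1 _ H1 v2 H12 H2 u Hu. destruct (H2 u Hu) as [x [Hux Hx]].
    exists x; split; [exact Hux |].
    apply (H1 u x (frame_le_trans _ _ _ H12 Hu) Hux x (frame_le_refl _) Hx).
  - intros w v _ H. apply (H v v (frame_le_refl _) (frame_sq_refl _)).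
  - intros w v _ H u Hu. exists u. split; [apply frame_sq_refl | eapply sat_persistent; eauto].
  - intros w v _ H u x Hu Hux y z Hxy Hyz.
    destruct (Hconf u x y Hux Hxy) as [u' [Huu' Hu'y]].
    apply (H u' z (frame_le_trans _ _ _ Hu Huu') (frame_sq_trans _ _ _ Hu'y Hyz)).
  - intros w v _ H u Hu. destruct (H u Hu) as [x [Hux Hx]].
    destruct (Hx x (frame_le_refl _)) as [y [Hxy Hy]].
    exists y; split; [eapply frame_sq_trans; eauto | exact Hy].
  - intros w. apply (IHHa1 w w (frame_le_refl _) (IHHa2 w)).
  - intros w u v _ _. apply IHHa.
Qed.

End Soundness.

(* Derivability from hypotheses G: hypotheses and CS4-theorems, closed under
   modus ponens only (necessitation is confined to theorems). *)
Inductive Der (G : form -> Prop) : form -> Prop :=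
| D_ax : forall a, G a -> Der G a
| D_thm : forall a, CS4 a -> Der G a
| D_mp : forall a b, Der G (Imp a b) -> Der G a -> Der G b.

Lemma Der_mono G H a : (forall x, G x -> H x) -> Der G a -> Der H a.
Proof.
  intros HGH D; induction D; [apply D_ax; auto | apply D_thm; auto | eapply D_mp; eauto].
Qed.

Lemma Der_cut G H a : Der G a -> (forall x, G x -> Der H x) -> Der H a.
Proof. intros D HGH; induction D; [auto | apply D_thm; auto | eapply D_mp; eauto]. Qed.

Lemma Der_ipc G a : IPC_axiom a -> Der G a.
Proof. intros; apply D_thm, cs4_ipc; assumption. Qed.

Lemma Der_refl G a : Der G (Imp a a).
Proof.
  eapply D_mp; [eapply D_mp |].
  - apply Der_ipc, (ax_S a (Imp a a) a).
  - apply Der_ipc, ax_K.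
  - apply Der_ipc, ax_K.
Qed.

(* The deduction theorem (valid because necessitation only acts on theorems). *)
Lemma deduction G a b : Der (fun y => G y \/ y = a) b -> Der G (Imp a b).
Proof.
  intros D; induction D as [x [Hx | <-] | x Hx | x y _ IH1 _ IH2].
  - eapply D_mp; [apply Der_ipc, ax_K | apply D_ax, Hx].
  - apply Der_refl.
  - eapply D_mp; [apply Der_ipc, ax_K | apply D_thm, Hx].
  - eapply D_mp; [eapply D_mp; [apply Der_ipc, ax_S | exact IH1] | exact IH2].
Qed.

Lemma Der_no_hyp a : Der (fun _ => False) a -> CS4 a.
Proof. intros D; induction D; [contradiction | assumption | eapply cs4_MP; eauto]. Qed.

Lemma Der_necessitation G a :
  Der G a -> Der (fun y => exists x, G x /\ y = Box x) (Box a).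
Proof.
  intros D; induction D.
  - apply D_ax. eauto.
  - apply D_thm, cs4_Nec; assumption.
  - eapply D_mp; [eapply D_mp; [apply D_thm, cs4_K | exact IHD1] | exact IHD2].
Qed.

Definition boxes (G : form -> Prop) (x : form) : Prop := exists b, x = Box b /\ G (Box b).

Lemma Der_boxes G a : Der (boxes G) a -> Der G (Box a).
Proof.
  intros D. eapply Der_cut; [apply Der_necessitation, D |].
  intros y [x [[b [-> Hb]] ->]].
  eapply D_mp; [apply D_thm, cs4_4 | apply D_ax, Hb].
Qed.

Lemma box_deduction G a c :
  Der (fun x => boxes G x \/ x = a) c -> Der G (Box (Imp a c)).
Proof. intros D. apply Der_boxes, deduction, D. Qed.

Fixpoint sub (f : form) : list form :=
  f :: match f with
       | And a b | Or a b | Imp a b => sub a ++ sub b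
       | Dia a | Box a => sub a
       | _ => []
       end.

Lemma sub_refl f : In f (sub f).
Proof. destruct f; simpl; auto. Qed.

Lemma sub_trans z x y : In x (sub y) -> In y (sub z) -> In x (sub z).
Proof.
  revert x y; induction z; intros x y Hxy Hyz; simpl in Hyz;
    destruct Hyz as [<- | Hyz]; auto; simpl; right;
    try (apply in_app_or in Hyz; apply in_or_app;
         destruct Hyz; [left; eapply IHz1 | right; eapply IHz2]; eauto);
    try (eapply IHz; eauto); contradiction.
Qed.

Definition subformula_closed (S : list form) : Prop :=
  forall x y, In y S -> In x (sub y) -> In x S.

Lemma sub_with_bot_closed phi : subformula_closed (Bot :: sub phi).
Proof.
  intros x y [<- | Hy] Hx.
  - destruct Hx as [<- | []]; left; reflexivity.
  - right. eapply sub_trans; eauto.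
Qed.

Fixpoint subsets {T : Type} (l : list T) : list (T -> Prop) :=
  match l with
  | [] => [fun _ => False]
  | a :: l' => flat_map (fun P => [P; fun x => x = a \/ P x]) (subsets l')
  end.

Lemma subsets_complete {T : Type} (l : list T) (P : T -> Prop) :
  (forall x, P x -> In x l) -> In P (subsets l).
Proof.
  revert P; induction l as [| a l IH]; intros P HP; simpl.
  - left. extensionality x. apply propositional_extensionality.
    split; [contradiction | intros Hx; apply (HP x Hx)].
  - pose (P' := fun x => P x /\ x <> a).
    apply in_flat_map. exists P'. split.
    { apply IH. intros x [Hx Hne]. destruct (HP x Hx); [congruence | assumption]. }
    destruct (classic (P a)) as [Ha | Ha]; [right; left | left];
      extensionality x; apply propositional_extensionality; unfold P'.
    + split; [intros [-> | [Hx _]]; auto | intros Hx; destruct (classic (x = a)); auto].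
    + split; [intros [Hx _]; exact Hx | intros Hx; split; [exact Hx | intros ->; auto]].
Qed.

Lemma finite_of_injection {A B : Type} (f : A -> B) (l : list B) :
  (forall x y, f x = f y -> x = y) -> (forall x, In (f x) l) -> finite_type A.
Proof.
  intros Hinj Hl.
  exists (flat_map (fun b =>
            match excluded_middle_informative (exists x, f x = b) with
            | left H => [proj1_sig (constructive_indefinite_description _ H)]
            | right _ => []
            end) l).
  intros x. apply in_flat_map. exists (f x). split; [apply Hl |].
  destruct (excluded_middle_informative _) as [H | H].
  - destruct (constructive_indefinite_description _ H) as [y Hy]. left. apply Hinj, Hy.
  - exfalso. apply H. exists x. reflexivity.
Qed.

Section Canonical.
Variable S : list form.
Hypothesis S_bot : In Bot S.
Hypothesis S_sub : subformula_closed S.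

Lemma S_and a b : In (And a b) S -> In a S /\ In b S.
Proof.
  intros H; split; apply (S_sub _ _ H); simpl; right; apply in_or_app;
    [left | right]; apply sub_refl.
Qed.

Lemma S_or a b : In (Or a b) S -> In a S /\ In b S.
Proof.
  intros H; split; apply (S_sub _ _ H); simpl; right; apply in_or_app;
    [left | right]; apply sub_refl.
Qed.

Lemma S_imp a b : In (Imp a b) S -> In a S /\ In b S.
Proof.
  intros H; split; apply (S_sub _ _ H); simpl; right; apply in_or_app;
    [left | right]; apply sub_refl.
Qed.

Lemma S_dia a : In (Dia a) S -> In a S.
Proof. intros H; apply (S_sub _ _ H); simpl; right; apply sub_refl. Qed.

Lemma S_box a : In (Box a) S -> In a S.
Proof. intros H; apply (S_sub _ _ H); simpl; right; apply sub_refl. Qed.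

Definition S_closed (G : form -> Prop) : Prop := forall p, In p S -> Der G p -> G p.

Definition prime (G : form -> Prop) : Prop := forall a b, G (Or a b) -> G a \/ G b.

(* Targets are
   inherited along ⊑, which is what refutes ◇c at the world. *)
Record W := mkW {
  th : form -> Prop;
  tg : option form;
  th_S : forall x, th x -> In x S;
  th_closed : S_closed th;
  th_prime : prime th;
  tg_spec : forall c, tg = Some c -> In (Dia c) S /\ ~ th (Dia c)
}.

Lemma no_target (G : form -> Prop) c :
  (None : option form) = Some c -> In (Dia c) S /\ ~ G (Dia c).
Proof. discriminate. Qed.

Lemma some_target (G : form -> Prop) c :
  In (Dia c) S -> ~ G (Dia c) ->
  forall c', Some c = Some c' -> In (Dia c') S /\ ~ G (Dia c').
Proof. intros Hc Hn c' E. injection E as <-. split; assumption. Qed.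

Definition untag (w : W) : W :=
  mkW (th w) None (th_S w) (th_closed w) (th_prime w) (no_target (th w)).

Definition retag (w : W) c (Hc : In (Dia c) S) (Hn : ~ th w (Dia c)) : W :=
  mkW (th w) (Some c) (th_S w) (th_closed w) (th_prime w) (some_target (th w) c Hc Hn).

Definition top_world : W :=
  mkW (fun x => In x S) None (fun x H => H) (fun p Hp _ => Hp)
      (fun a b H => or_introl (proj1 (S_or a b H))) (no_target _).

Lemma th_thm (w : W) a b : In b S -> CS4 (Imp a b) -> th w a -> th w b.
Proof.
  intros Hb Hab Ha. apply (th_closed w b Hb).
  eapply D_mp; [apply D_thm, Hab | apply D_ax, Ha].
Qed.

Lemma th_mp (w : W) a b : In b S -> th w (Imp a b) -> th w a -> th w b.
Proof.
  intros Hb Hab Ha. apply (th_closed w b Hb).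
  eapply D_mp; apply D_ax; eassumption.
Qed.

Lemma th_efq (w : W) p : th w Bot -> In p S -> th w p.
Proof. intros Hbot Hp. apply th_thm with Bot; [exact Hp | apply cs4_ipc, ax_efq | exact Hbot]. Qed.

Section Lindenbaum.
Variable chi : form.
Variable D0 : form -> Prop.

Fixpoint extend (l : list form) : form -> Prop :=
  match l with
  | [] => D0
  | s :: l' => fun x => extend l' x \/ (x = s /\ ~ Der (fun y => extend l' y \/ y = s) chi)
  end.

Lemma extend_incl l x : D0 x -> extend l x.
Proof. induction l; simpl; auto. Qed.

Lemma extend_S : (forall x, D0 x -> In x S) -> forall l x, extend l x -> In x S \/ In x l.
Proof.
  intros H0; induction l as [| s l IH]; simpl; intros x Hx; [left; auto |].
  destruct Hx as [Hx | [-> _]]; [destruct (IH x Hx); auto | right; left; reflexivity].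
Qed.

Lemma extend_consistent : ~ Der D0 chi -> forall l, ~ Der (extend l) chi.
Proof.
  intros H0; induction l as [| s l IH]; simpl; [exact H0 |]. intros D.
  destruct (classic (Der (fun y => extend l y \/ y = s) chi)) as [H | H].
  - apply IH. eapply Der_mono; [| exact D]. intros x [Hx | [_ Hx]]; tauto.
  - apply H. eapply Der_mono; [| exact D]. intros x [Hx | [Hx _]]; auto.
Qed.

Lemma extend_decides l s :
  In s l -> extend l s \/ Der (fun y => extend l y \/ y = s) chi.
Proof.
  induction l as [| a l IH]; simpl; intros Hs; [contradiction |].
  destruct Hs as [-> | Hs].
  - destruct (classic (Der (fun y => extend l y \/ y = s) chi)) as [H | H].
    + right. eapply Der_mono; [| exact H]. intros x [Hx | Hx]; auto.
    + left; right; auto.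
  - destruct (IH Hs) as [H | H]; [left; left; exact H | right].
    eapply Der_mono; [| exact H]. intros x [Hx | Hx]; auto.
Qed.

End Lindenbaum.

Lemma lindenbaum_world D0 chi :
  (forall x, D0 x -> In x S) -> ~ Der D0 chi ->
  exists w : W, tg w = None /\ (forall x, D0 x -> th w x) /\ ~ th w chi.
Proof.
  intros H0 Hn. pose (D := extend chi D0 S).
  assert (HDS : forall x, D x -> In x S).
  { intros x Hx. destruct (extend_S chi D0 H0 S x Hx); assumption. }
  assert (Hcons : ~ Der D chi) by apply (extend_consistent chi D0 Hn).
  assert (Hclosed : S_closed D).
  { intros p Hp Dp. destruct (extend_decides chi D0 S p Hp) as [H | H]; [exact H |].
    exfalso. apply Hcons. eapply D_mp; [apply deduction, H | exact Dp]. }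
  assert (Hprime : prime D).
  { intros a b Hab. destruct (S_or a b (HDS _ Hab)) as [Ha Hb].
    destruct (extend_decides chi D0 S a Ha) as [H1 | H1]; [left; exact H1 |].
    destruct (extend_decides chi D0 S b Hb) as [H2 | H2]; [right; exact H2 |].
    exfalso. apply Hcons.
    eapply D_mp; [eapply D_mp; [eapply D_mp; [apply Der_ipc, ax_orE |] |] |].
    - apply deduction, H1.
    - apply deduction, H2.
    - apply D_ax, Hab. }
  exists (mkW D None HDS Hclosed Hprime (no_target D)). simpl.
  split; [reflexivity | split].
  - apply extend_incl.
  - intros Hchi. apply Hcons, D_ax, Hchi.
Qed.

Definition leW (w v : W) : Prop := forall x, th w x -> th v x.

Definition sqW (w v : W) : Prop :=
  (forall b, th w (Box b) -> th v (Box b)) /\ (th w Bot -> th v Bot) /\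
  (forall c, tg w = Some c -> tg v = Some c).

Definition fallW (w : W) : Prop := th w Bot.

Lemma leW_pre : preorder leW.
Proof. split; unfold leW; auto. Qed.

Lemma sqW_pre : preorder sqW.
Proof.
  split; unfold sqW.
  - intros w; repeat split; auto.
  - intros u v w [H1 [H2 H3]] [H4 [H5 H6]]; repeat split; auto.
Qed.

Lemma fallW_le : up_closed leW fallW.
Proof. intros w v H1 H2; apply H2, H1. Qed.

Lemma fallW_sq : up_closed sqW fallW.
Proof. intros w v H1 H2; apply H2, H1. Qed.

Definition canonical_frame : frame :=
  {| world := W; fallible := fallW; le := leW; sq := sqW;
     le_pre := leW_pre; sq_pre := sqW_pre;
     fallible_up_le := fallW_le; fallible_up_sq := fallW_sq |}.

(* Fallible worlds must force every variable. *)
Definition valW (p : nat) (w : W) : Prop := th w (Var p) \/ th w Bot.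

Lemma valW_up p : up_closed (le canonical_frame) (valW p).
Proof. intros w v [H | H] Hwv; [left | right]; apply Hwv, H. Qed.

Lemma valW_fallible p w : fallible canonical_frame w -> valW p w.
Proof. intros H; right; exact H. Qed.

Definition canonical_model : model :=
  {| mframe := canonical_frame; val := valW;
     val_up := valW_up; val_fallible := valW_fallible |}.

(* Backward confluence: if w ⊑ v ≼ v', then w ≼ untag w ⊑ v', since the
   untagged copy of w imposes no target. *)
Lemma canonical_CS4 : CS4_model canonical_model.
Proof.
  intros w v v' [Hbox [Hbot _]] Hvv'. exists (untag w).
  split; [intros x Hx; exact Hx |].
  repeat split; simpl; auto; discriminate.
Qed.

Definition truthful (p : form) : Prop :=
  forall w : W, sat canonical_model w p <-> th w p.

Lemma truth_var n : In (Var n) S -> truthful (Var n).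
Proof.
  intros Hn w; simpl; unfold valW.
  split; [intros [H | H]; [exact H | apply th_efq; assumption] | left; assumption].
Qed.

Lemma truth_bot : truthful Bot.
Proof. intros w; simpl; reflexivity. Qed.

Lemma truth_and a b : In (And a b) S -> truthful a -> truthful b -> truthful (And a b).
Proof.
  intros HS IHa IHb w; simpl. rewrite (IHa w), (IHb w). destruct (S_and a b HS) as [Ha Hb]. split.
  - intros [Hwa Hwb]. apply (th_closed w _ HS).
    eapply D_mp; [eapply D_mp; [apply Der_ipc, ax_andI | apply D_ax, Hwa] | apply D_ax, Hwb].
  - intros H; split; eapply th_thm; eauto; apply cs4_ipc; constructor.
Qed.

Lemma truth_or a b : In (Or a b) S -> truthful a -> truthful b -> truthful (Or a b).
Proof.
  intros HS IHa IHb w; simpl. rewrite (IHa w), (IHb w). split.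
  - intros [H | H]; eapply th_thm; eauto; apply cs4_ipc; constructor.
  - apply th_prime.
Qed.

(* A refuted implication a → b is refuted in an extension containing a but not b. *)
Lemma truth_imp a b : In (Imp a b) S -> truthful a -> truthful b -> truthful (Imp a b).
Proof.
  intros HS IHa IHb w. destruct (S_imp a b HS) as [Ha Hb]. simpl. split.
  - intros Hsat. apply NNPP; intros Hn.
    destruct (lindenbaum_world (fun y => th w y \/ y = a) b) as [v [_ [Hwv Hv]]].
    + intros x [Hx | ->]; [apply (th_S w), Hx | exact Ha].
    + intros D. apply Hn, (th_closed w _ HS), deduction, D.
    + apply Hv, IHb, Hsat.
      * intros x Hx; apply Hwv; left; exact Hx.
      * apply IHa, Hwv; right; reflexivity.
  - intros Hw v Hwv Hva. apply IHb. apply IHa in Hva. eapply th_mp; eauto.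
Qed.

(* A ⊑-successor of a tagged world containing ◇a and a: extend the boxed part
   plus a while avoiding the target ◇c, which stays refuted by axioms K◇ and 4◇. *)
Lemma dia_witness_tagged (u : W) a c :
  In a S -> th u (Dia a) -> tg u = Some c -> exists v, sqW u v /\ th v a.
Proof.
  intros Ha Hu Etg. destruct (tg_spec u c Etg) as [Hc Hnc].
  destruct (lindenbaum_world (fun x => boxes (th u) x \/ x = a) (Dia c))
    as [v [_ [Hv0 Hv]]].
  - intros x [[b [-> Hb]] | ->]; [apply (th_S u), Hb | exact Ha].
  - intros D. apply Hnc, (th_closed u _ Hc).
    eapply D_mp; [apply D_thm, cs4_4d |].
    eapply D_mp; [eapply D_mp; [apply D_thm, cs4_Kd | apply box_deduction, D] |].
    apply D_ax, Hu.
  - exists (retag v c Hc Hv). split; [repeat split; simpl |].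
    + intros b Hb. apply Hv0. left. exists b. split; [reflexivity | exact Hb].
    + intros Hbot. exfalso. apply Hnc, th_efq; assumption.
    + rewrite Etg. intros c' E. exact E.
    + apply Hv0. right. reflexivity.
Qed.

(* An untagged world has a ⊑-successor containing any a ∈ S: extend the boxed
   part plus a consistently, or take all of S if that is inconsistent. *)
Lemma dia_witness_untagged (u : W) a :
  In a S -> tg u = None -> exists v, sqW u v /\ th v a.
Proof.
  intros Ha Etg.
  destruct (classic (th u Bot \/ Der (fun x => boxes (th u) x \/ x = a) Bot))
    as [Hincons | Hcons].
  - exists top_world. split; [repeat split; simpl | exact Ha].
    + intros b Hb. apply (th_S u), Hb.
    + intros _. exact S_bot.
    + rewrite Etg. discriminate.
  - destruct (lindenbaum_world (fun x => boxes (th u) x \/ x = a) Bot)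
      as [v [_ [Hv0 _]]].
    + intros x [[b [-> Hb]] | ->]; [apply (th_S u), Hb | exact Ha].
    + intros D. apply Hcons. right. exact D.
    + exists v. split; [repeat split |].
      * intros b Hb. apply Hv0. left. exists b. split; [reflexivity | exact Hb].
      * intros Hbot. exfalso. apply Hcons. left. exact Hbot.
      * rewrite Etg. discriminate.
      * apply Hv0. right. reflexivity.
Qed.

(* A refuted ◇a is refuted by retagging with target a: every ⊑-successor then
   refutes ◇a, hence a (axiom T◇). *)
Lemma truth_dia a : In (Dia a) S -> truthful a -> truthful (Dia a).
Proof.
  intros HS IHa w. pose proof (S_dia a HS) as Ha. simpl. split.
  - intros Hsat. apply NNPP; intros Hn.
    destruct (Hsat (retag w a HS Hn) (fun x Hx => Hx)) as [v [[_ [_ Htg]] Hv]].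
    destruct (tg_spec v a (Htg a eq_refl)) as [_ Hnv].
    apply Hnv, th_thm with a; [exact HS | apply cs4_Td | apply IHa, Hv].
  - intros Hw u Hwu. pose proof (Hwu _ Hw) as Hu.
    assert (Hwit : exists v, sqW u v /\ th v a).
    { destruct (tg u) as [c |] eqn:Etg.
      - apply dia_witness_tagged with c; assumption.
      - apply dia_witness_untagged; assumption. }
    destruct Hwit as [v [Huv Hv]]. exists v. split; [exact Huv | apply IHa, Hv].
Qed.

(* A refuted □a is refuted by an untagged extension of the boxed part avoiding a. *)
Lemma truth_box a : In (Box a) S -> truthful a -> truthful (Box a).
Proof.
  intros HS IHa w. pose proof (S_box a HS) as Ha. simpl. split.
  - intros Hsat. apply NNPP; intros Hn.
    destruct (lindenbaum_world (boxes (th w)) a) as [v [_ [Hv0 Hv]]].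
    + intros x [b [-> Hb]]; apply (th_S w), Hb.
    + intros D. apply Hn, (th_closed w _ HS), Der_boxes, D.
    + apply Hv, IHa, (Hsat (untag w) v (fun x Hx => Hx)).
      repeat split; simpl.
      * intros b Hb. apply Hv0. exists b. split; [reflexivity | exact Hb].
      * intros Hbot. exfalso. apply Hn, th_efq; assumption.
      * discriminate.
  - intros Hw u v Hwu [Huv _]. apply IHa.
    apply th_thm with (Box a); [exact Ha | apply cs4_T | apply Huv, Hwu, Hw].
Qed.

Lemma truth p : In p S -> truthful p.
Proof.
  induction p; intros HS.
  - apply truth_var, HS.
  - apply truth_bot.
  - destruct (S_and _ _ HS); apply truth_and; auto.
  - destruct (S_or _ _ HS); apply truth_or; auto.
  - destruct (S_imp _ _ HS); apply truth_imp; auto.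
  - apply truth_dia; auto. apply IHp, S_dia, HS.
  - apply truth_box; auto. apply IHp, S_box, HS.
Qed.

Lemma W_eq (w v : W) : th w = th v -> tg w = tg v -> w = v.
Proof. destruct w, v; simpl; intros E1 E2; subst. f_equal; apply proof_irrelevance. Qed.

(* A world is determined by its theory, a subset of S, and its target in S. *)
Lemma canonical_finite : finite_type W.
Proof.
  apply (finite_of_injection (fun w => (th w, tg w)) (list_prod (subsets S) (None :: map Some S))).
  - intros w v E. injection E as E1 E2. apply W_eq; assumption.
  - intros w. apply in_prod; [apply subsets_complete, th_S |].
    destruct (tg w) as [c |] eqn:E; [right | left; reflexivity].
    apply in_map, S_dia, (tg_spec w c E).
Qed.
End Canonical.

Theorem mainTheorem1 :
  (forall phi : form, ~ CS4 phi ->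
     exists M : model, CS4_model M /\ finite_type (world (mframe M)) /\
                       ~ valid_in M phi)
  /\
  (forall phi : form, CS4 phi -> forall M : model, CS4_model M -> valid_in M phi).
Proof.
  split.
  - intros phi Hphi.
    pose (S := Bot :: sub phi).
    assert (S_bot : In Bot S) by (left; reflexivity).
    assert (phi_S : In phi S) by (right; apply sub_refl).
    pose proof (sub_with_bot_closed phi) as S_sub.
    destruct (lindenbaum_world S S_sub (fun _ => False) phi) as [w [_ [_ Hw]]].
    + contradiction.
    + intros D. apply Hphi, Der_no_hyp, D.
    + exists (canonical_model S). split; [apply canonical_CS4 |].
      split; [apply canonical_finite; assumption |].
      intros Hvalid. apply Hw, (truth S S_bot S_sub phi phi_S w), Hvalid.
      intros Hbot. apply Hw, th_efq; assumption.
  - intros phi Hphi M HM w _. apply CS4_sound; assumption.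
Qed.
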